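(* Let $d_1\le\dots\le d_n$ be a \textsc{2-Visits} instance with discretized sequence $\langle a_1,\dots,a_n\rangle$. For every $i\in[n]$, in any feasible schedule at most $n-i$ primary visits occur at positions strictly greater than $a_i$.
   Context: \textsc{2-Visits} (primary/secondary formulation): given non-decreasing positive integers $d_1\le\dots\le d_n$, a feasible schedule is a schedule of length $2n$ (each position $1,\dots,2n$ holds one visit) containing one primary and one secondary visit of each node $i\in[n]$, such that the primary visit of $i$ is at position at most $d_i$, and the secondary visit of $i$ is either before its primary visit or at most $d_i$ positions after its primary visit. The discretized sequence is defined by $a_n=d_n$ and $a_i=\min\{a_{i+1}-1,d_i\}$ for $i<n$. *)

From mathcomp Require Import all_boot.
Set Implicit Arguments. Unset Strict Implicit. Unset Printing Implicit Defensive.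

(* Nodes are 1..n; positions are 1..2n. d : nat -> nat gives the deadlines. *)

(* Discretized sequence: a_n = d_n, a_i = min(a_{i+1} - 1, d_i) for i < n.
   disc_aux d n k = a_{n-k}. Truncated subtraction on nat: a value that would be
   <= 0 becomes 0, which does not affect "positions strictly greater than a_i"
   since positions are >= 1. *)
Fixpoint disc_aux (d : nat -> nat) (n k : nat) : nat :=
  match k with
  | 0 => d n
  | k'.+1 => minn (disc_aux d n k' - 1) (d (n - k'.+1))
  end.

Definition disc (d : nat -> nat) (n i : nat) : nat := disc_aux d n (n - i).

Definition instance (n : nat) (d : nat -> nat) : Prop :=
  (forall i, 1 <= i <= n -> 0 < d i) /\
  (forall i j, 1 <= i <= j -> j <= n -> d i <= d j).

(* A schedule: prim i / sec i are the positions of the primary / secondary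
   visit of node i. *)
Definition feasible (n : nat) (d : nat -> nat) (prim sec : nat -> nat) : Prop :=
  (forall i, 1 <= i <= n -> 1 <= prim i <= 2 * n /\ 1 <= sec i <= 2 * n) /\
  (forall i j, 1 <= i <= n -> 1 <= j <= n -> i != j -> prim i <> prim j) /\
  (forall i j, 1 <= i <= n -> 1 <= j <= n -> i != j -> sec i <> sec j) /\
  (forall i j, 1 <= i <= n -> 1 <= j <= n -> prim i <> sec j) /\
  (forall i, 1 <= i <= n -> prim i <= d i) /\
  (forall i, 1 <= i <= n -> sec i < prim i \/ sec i <= prim i + d i).

(* Downward induction on i.  Where a_i = d_i, a late primary visit of j means
   d_i < prim j <= d_j, so j > i by monotonicity, leaving at most n - i
   candidates.  Where a_i = a_(i+1) - 1, the only position late for a_i but not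
   for a_(i+1) is a_(i+1) itself, which holds at most one primary visit. *)

From mathcomp Require Import all_boot.
From mathcomp Require Import zify.

Set Implicit Arguments.
Unset Strict Implicit.
Unset Printing Implicit Defensive.

Lemma disc_n d n : disc d n n = d n.
Proof. by rewrite /disc subnn. Qed.

Lemma discS d n i : i < n -> disc d n i = minn (disc d n i.+1 - 1) (d i).
Proof.
move=> lt_in; rewrite /disc.
have -> : n - i = (n - i.+1).+1 by lia.
by rewrite /=; have -> : n - (n - i.+1).+1 = i by lia.
Qed.

Lemma card_ord_gt n i : #|[set j : 'I_n.+1 | i < j]| = n - i.
Proof.
rewrite -sum1_card (eq_bigl (fun j : 'I_n.+1 => true && (i < j))) => [|j].
  rewrite -(big_geq_mkord (op := addn) i.+1 n.+1 xpredT (fun=> 1)).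
  by rewrite sum_nat_const_nat muln1 subSS.
by rewrite inE.
Qed.

Section LatePrimaryVisits.

Variables (n : nat) (d prim : nat -> nat).

Hypothesis d_mono : forall i j, 1 <= i <= j -> j <= n -> d i <= d j.
Hypothesis prim_le_d : forall j, 1 <= j <= n -> prim j <= d j.
Hypothesis prim_inj :
  forall i j, 1 <= i <= n -> 1 <= j <= n -> i != j -> prim i <> prim j.

Definition late (a : nat) : {set 'I_n.+1} :=
  [set j : 'I_n.+1 | (0 < (j : nat)) && (a < prim j)].

Lemma card_late_deadline i : 1 <= i <= n -> #|late (d i)| <= n - i.
Proof.
move=> i_range; rewrite -card_ord_gt; apply: subset_leq_card.
apply/subsetP => j; rewrite !inE => /andP[j_pos late_j].
rewrite ltnNge; apply/negP => le_ji.
have := ltn_ord j; have := @prim_le_d j; have := @d_mono j i; lia.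
Qed.

Lemma card_prim_at_le1 a :
  #|[set j : 'I_n.+1 | (0 < (j : nat)) && (prim j == a)]| <= 1.
Proof.
apply/card_le1_eqP => x y; rewrite !inE => /andP[x_pos /eqP px] /andP[y_pos /eqP py].
apply: val_inj; apply/eqP/negPn/negP => neq_xy.
have x_range : 1 <= x <= n by have := ltn_ord x; lia.
have y_range : 1 <= y <= n by have := ltn_ord y; lia.
by apply: (prim_inj y_range x_range neq_xy); rewrite px py.
Qed.

Lemma card_late_pred a : #|late (a - 1)| <= #|late a| + 1.
Proof.
set at_a := [set j : 'I_n.+1 | (0 < (j : nat)) && (prim j == a)].
have late_pred_sub : late (a - 1) \subset late a :|: at_a.
  apply/subsetP => j; rewrite !inE => /andP[-> late_j] /=.
  by case: (ltngtP a (prim j)) => // lt_prim_a; lia.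
apply: leq_trans (subset_leq_card late_pred_sub) _.
apply: leq_trans (leq_card_setU _ _) _.
by rewrite leq_add2l card_prim_at_le1.
Qed.

Lemma card_late_disc i : 1 <= i <= n -> #|late (disc d n i)| <= n - i.
Proof.
move: {2}(n - i) (erefl (n - i)) => k.
elim: k i => [|k IH] i gap /andP[i_pos le_in].
  have -> : i = n by lia.
  by rewrite disc_n; apply: card_late_deadline; lia.
have lt_in : i < n by lia.
rewrite discS //.
(* [leqP] also resolves the [minn] in the goal. *)
case: (leqP (d i) (disc d n i.+1 - 1)) => _.
  by apply: card_late_deadline; lia.
apply: leq_trans (card_late_pred _) _.
have := IH i.+1; lia.
Qed.

End LatePrimaryVisits.

Theorem lemma3 (n : nat) (d : nat -> nat) (prim sec : nat -> nat) :
  instance n d -> feasible n d prim sec ->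
  forall i, 1 <= i <= n ->
    #|[set j : 'I_n.+1 | (0 < (j : nat)) && (disc d n i < prim j)]| <= n - i.
Proof.
move=> [_ d_mono] [_ [prim_inj [_ [_ [prim_le_d _]]]]] i i_range.
exact: (card_late_disc d_mono prim_le_d prim_inj).
Qed.
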